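(* Let $p\ge 1$, $\sigma^2>0$, let $\boldsymbol\beta=(\beta_1,\dots,\beta_p)^\top\in\mathbb{R}^p$ be not identically zero (entries of arbitrary sign), and let $\Delta=\mathrm{diag}(\delta_1^2,\dots,\delta_p^2)$ with all $\delta_i^2>0$. Let $\Sigma=\sigma^2\boldsymbol\beta\boldsymbol\beta^\top+\Delta$. Assume $\sum_{i=1}^p \beta_i/\delta_i^2\ge 0$ and $\beta_1\le\beta_2\le\cdots\le\beta_p$. 1. Let $R_1=1/\sigma^2$ and, for $2\le i\le p$, $$R_i=\frac{1}{\sigma^2}+\sum_{j=1}^{i-1}\frac{\beta_j}{\delta_j^2}(\beta_j-\beta_i)=\frac{1}{\sigma^2}+\sum_{j=1}^{i}\frac{\beta_j}{\delta_j^2}(\beta_j-\beta_i).$$ Then there exists $s\le p$ such that $0<R_1\le R_2\le\cdots\le R_s\ge R_{s+1}\ge\cdots\ge R_p$. In particular, with $\ell=\max\{i: R_i>0\}$, one has $R_i>0$ if and only if $i\le \ell$, and the sequence $(R_i)$ crosses zero at most once. 2. Let $w^L$ be the unique solution of $\min_{w\in\mathbb{R}^p} w^\top\Sigma w$ subject to $w^\top\mathbf{1}_p=1$ and $w_i\ge0$ for all $i$; let $K=\{i: w^L_i>0\}$ and $k=|K|$. Then $k=\ell$ and $K=\{1,2,\dots,\ell\}$. Moreover, letting $\Sigma^K$ be the $k\times k$ submatrix of $\Sigma$ formed by its first $k$ rows and columns and $$w^K=\frac{(\Sigma^K)^{-1}\mathbf{1}_k}{\mathbf{1}_k^\top(\Sigma^K)^{-1}\mathbf{1}_k},$$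 the solution $w^L$ is given by $w^L_i=w^K_i$ for $i=1,\dots,k$ and $w^L_i=0$ for $i=k+1,\dots,p$.
   Context: $\mathbf{1}_m$ denotes the all-ones vector in $\mathbb{R}^m$. The sign normalization $\sum_i\beta_i/\delta_i^2\ge0$ and the increasing ordering of the $\beta_i$ are standing assumptions under which the theorem is stated (replacing $\boldsymbol\beta$ by $-\boldsymbol\beta$ and reordering assets do not change the problem). *)

(* The dimension p >= 1 is encoded as p = n.+1; indices are
   0-based ordinals 'I_n.+1 (paper index i corresponds to ordinal i-1). *)
From HB Require Import structures.
From mathcomp Require Import all_boot all_order all_algebra.
Set Implicit Arguments. Unset Strict Implicit. Unset Printing Implicit Defensive.
Import Order.TTheory GRing.Theory Num.Theory.
Local Open Scope ring_scope.

Section Defs.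
Variables (R : realFieldType) (n : nat).
Local Notation p := n.+1.

Definition Sigma (sigma2 : R) (beta : 'cV[R]_p) (d2 : 'I_p -> R) : 'M[R]_p :=
  sigma2 *: (beta *m beta^T) + diag_mx (\row_i d2 i).

Definition Rseq (sigma2 : R) (beta : 'cV[R]_p) (d2 : 'I_p -> R) (i : 'I_p) : R :=
  1 / sigma2 + \sum_(j < p | (j < i)%N) beta j 0 / d2 j * (beta j 0 - beta i 0).

Definition ell (sigma2 : R) (beta : 'cV[R]_p) (d2 : 'I_p -> R) : nat :=
  \max_(i < p | (0 < Rseq sigma2 beta d2 i)%R) i.+1.

Definition feasible (w : 'cV[R]_p) : Prop :=
  (w^T *m (const_mx 1 : 'cV[R]_p)) 0 0 = 1 /\ forall i, 0 <= w i 0.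

Definition quadf (S : 'M[R]_p) (w : 'cV[R]_p) : R := (w^T *m S *m w) 0 0.

Definition is_minimizer (S : 'M[R]_p) (w : 'cV[R]_p) : Prop :=
  feasible w /\ forall v, feasible v -> quadf S w <= quadf S v.

(* the k x k leading principal submatrix (meaningful for k <= p) *)
Definition lead_sub (k : nat) (A : 'M[R]_p) : 'M[R]_k :=
  \matrix_(i < k, j < k) A (inord i) (inord j).

Definition wK (k : nat) (A : 'M[R]_p) : 'cV[R]_k :=
  let SK := lead_sub k A in
  let one : 'cV[R]_k := const_mx 1 in
  ((one^T *m invmx SK *m one) 0 0)^-1 *: (invmx SK *m one).

End Defs.

(* With t_j = beta_j / delta_j^2 ([ratio]) and the affine functions
   F_k(x) = 1/sigma^2 + sum_{j<k} t_j (beta_j - x) ([Rfun]), one has R_i = F_i(beta_i) and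
   R_{i+1} - R_i = -(beta_{i+1} - beta_i) sum_{j<=i} t_j.  Since the beta_j increase, the
   partial sums of the t_j stay positive once they are, so R first rises and then falls;
   as R_1 = 1/sigma^2 > 0, its positive part is an initial segment 1..l.
   The weights w_i proportional to F_l(beta_i) / delta_i^2 for i <= l, and 0 beyond, satisfy
   the KKT conditions: (Sigma w)_i is a constant lambda on the support and at least lambda
   off it, because F_l(beta_i) <= 0 there.  As Sigma is positive definite, this makes w the
   unique minimiser, and on the first l coordinates it reads Sigma^K w^K = lambda 1, which
   is the closed form. *)

From HB Require Import structures.
From mathcomp Require Import all_boot all_order all_algebra.
From mathcomp Require Import ring lra.
Set Implicit Arguments. Unset Strict Implicit. Unset Printing Implicit Defensive.
Import Order.TTheory GRing.Theory Num.Theory.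
Local Open Scope ring_scope.

Section QuadraticForms.
Variables (R : realFieldType) (m : nat).

Lemma mulmx_trmx_col (u v : 'cV[R]_m) : (u^T *m v) 0 0 = \sum_i u i 0 * v i 0.
Proof. by rewrite mxE; apply: eq_bigr => i _; rewrite mxE. Qed.

Definition posdef (A : 'M[R]_m) :=
  forall v : 'cV[R]_m, v != 0 -> 0 < (v^T *m A *m v) 0 0.

Variable A : 'M[R]_m.

Lemma posdef_form_ge0 (v : 'cV[R]_m) : posdef A -> 0 <= (v^T *m A *m v) 0 0.
Proof.
move=> A_pd; have [->|v_neq0] := eqVneq v 0; last exact/ltW/A_pd.
by rewrite mulmx0 mxE.
Qed.

Lemma posdef_unitmx : posdef A -> A \in unitmx.
Proof.
move=> A_pd; rewrite unitmxE unitfE; apply/negP => /det0P[v v_neq0 vA0].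
have vT_neq0 : v^T != 0.
  by apply: contra v_neq0 => /eqP/(congr1 trmx); rewrite trmxK trmx0 => ->.
by have := A_pd _ vT_neq0; rewrite trmxK vA0 mul0mx mxE ltxx.
Qed.

Lemma form_sym_expand (v w : 'cV[R]_m) : A^T = A ->
  (v^T *m A *m v) 0 0 = (w^T *m A *m w) 0 0 + ((v - w)^T *m A *m (v - w)) 0 0
                        + 2 * \sum_i (v - w) i 0 * (A *m w) i 0.
Proof.
move=> A_sym; set e := v - w; have -> : v = w + e by rewrite addrC subrK.
have addE (M N : 'M[R]_1) : (M + N) 0 0 = M 0 0 + N 0 0 by rewrite mxE.
have cross : (w^T *m A *m e) 0 0 = (e^T *m A *m w) 0 0.
  have trE (M : 'M[R]_1) : M 0 0 = M^T 0 0 by rewrite mxE.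
  by rewrite trE !trmx_mul trmxK A_sym mulmxA.
rewrite mulmxDr [(w + e)^T]raddfD /= !mulmxDl !addE cross -[e^T *m A *m w]mulmxA mulmx_trmx_col.
ring.
Qed.
End QuadraticForms.

Lemma feasible_sum (R : realFieldType) (n : nat) (v : 'cV[R]_n.+1) :
  feasible v -> \sum_i v i 0 = 1.
Proof. by case=> <- _; rewrite mulmx_trmx_col; apply: eq_bigr => i _; rewrite mxE mulr1. Qed.

Section KKT.
Variables (R : realFieldType) (n : nat) (S : 'M[R]_n.+1) (w : 'cV[R]_n.+1) (lam : R).
Hypothesis S_sym : S^T = S.
Hypothesis S_pd : posdef S.
Hypothesis w_feas : feasible w.
Hypothesis grad_ge : forall i, lam <= (S *m w) i 0.
Hypothesis grad_supp : forall i, 0 < w i 0 -> (S *m w) i 0 = lam.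

Lemma kkt_cross_ge0 v : feasible v -> 0 <= \sum_i (v - w) i 0 * (S *m w) i 0.
Proof.
move=> v_feas; have w_term i : w i 0 * (S *m w) i 0 = w i 0 * lam.
  have [/grad_supp -> // | w_le0] := ltP 0 (w i 0).
  have -> : w i 0 = 0 by apply/le_anti; rewrite w_le0 (w_feas.2 i).
  by rewrite !mul0r.
rewrite (eq_bigr (fun i => v i 0 * (S *m w) i 0 - w i 0 * lam)); last first.
  by move=> i _; rewrite -w_term !mxE mulrBl.
rewrite sumrB -mulr_suml (feasible_sum w_feas) mul1r subr_ge0.
rewrite -[X in X <= _]mul1r -(feasible_sum v_feas) mulr_suml.
by apply: ler_sum => i _; apply: ler_wpM2l; [exact: v_feas.2 | exact: grad_ge].
Qed.

Lemma kkt_minimizerE v : is_minimizer S v <-> v = w.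
Proof.
have expand u := form_sym_expand u w S_sym.
split=> [[v_feas v_min]|->].
  have := v_min w w_feas; rewrite /quadf (expand v).
  have := kkt_cross_ge0 v_feas => cross_ge0 le_vw.
  apply/eqP; rewrite -subr_eq0; apply/negPn/negP => /S_pd; lra.
split=> // u u_feas; rewrite /quadf (expand u).
have := kkt_cross_ge0 u_feas; have := posdef_form_ge0 (u - w) S_pd; lra.
Qed.

End KKT.

Section RankOnePlusDiagonal.
Variables (R : realFieldType) (m : nat) (s : R) (b d : 'I_m -> R).

Definition rank1_diag (A : 'M[R]_m) :=
  forall i j, A i j = s * b i * b j + (i == j)%:R * d i.

Variable A : 'M[R]_m.
Hypothesis A_r1d : rank1_diag A.

Lemma rank1_diag_tr : A^T = A.
Proof.
apply/matrixP => i j; rewrite mxE !A_r1d eq_sym.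
by have [->|_] := eqVneq j i; rewrite ?mul0r //; ring.
Qed.

Lemma rank1_diag_mulmx (v : 'cV[R]_m) i :
  (A *m v) i 0 = s * b i * (\sum_j b j * v j 0) + d i * v i 0.
Proof.
rewrite mxE (eq_bigr (fun j => s * b i * (b j * v j 0) + (i == j)%:R * (d i * v j 0))).
  rewrite big_split /= -mulr_sumr; congr (_ + _).
  rewrite (bigD1 i) //= eqxx mul1r big1 ?addr0 // => j j_neq_i.
  by rewrite eq_sym (negPf j_neq_i) mul0r.
by move=> j _; rewrite A_r1d; ring.
Qed.

Lemma rank1_diag_form (v : 'cV[R]_m) :
  (v^T *m A *m v) 0 0 = s * (\sum_j b j * v j 0) ^+ 2 + \sum_i d i * v i 0 ^+ 2.
Proof.
rewrite -mulmxA mulmx_trmx_col (eq_bigr (fun i =>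
  s * (\sum_j b j * v j 0) * (b i * v i 0) + d i * v i 0 ^+ 2)).
  by rewrite big_split /= -mulr_sumr; ring.
by move=> i _; rewrite rank1_diag_mulmx; ring.
Qed.

Hypotheses (s_gt0 : 0 < s) (d_gt0 : forall i, 0 < d i).

Lemma rank1_diag_posdef : posdef A.
Proof.
move=> v; rewrite rank1_diag_form ltNge; apply: contra => form_le0.
have term_ge0 i : 0 <= d i * v i 0 ^+ 2 by rewrite mulr_ge0 ?sqr_ge0 ?ltW.
have rank1_ge0 : 0 <= s * (\sum_j b j * v j 0) ^+ 2 by rewrite mulr_ge0 ?sqr_ge0 ?ltW.
have diag_ge0 : 0 <= \sum_i d i * v i 0 ^+ 2 by rewrite sumr_ge0.
have /psumr_eq0P sum0 : \sum_i d i * v i 0 ^+ 2 = 0 by lra.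
apply/eqP/matrixP => i j; rewrite (ord1 j) mxE.
have /eqP := sum0 (fun i _ => term_ge0 i) i isT.
by rewrite mulf_eq0 sqrf_eq0 gt_eqF //= => /eqP.
Qed.

End RankOnePlusDiagonal.

Section LeadingBlock.
Variables (R : realFieldType) (n k : nat).
Hypothesis le_k : (k <= n.+1)%N.

Lemma inord_lead_eq (i j : 'I_k) : (inord i == inord j :> 'I_n.+1) = (i == j).
Proof. by rewrite -val_eqE /= !inordK ?(leq_trans (ltn_ord _) le_k). Qed.

Lemma sum_lead (F : 'I_n.+1 -> R) :
  (forall i : 'I_n.+1, (k <= i)%N -> F i = 0) -> \sum_(i < k) F (inord i) = \sum_i F i.
Proof.
move=> F_supp; rewrite (big_ord_widen _ (fun j => F (inord j)) le_k) big_mkcond /=.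
by apply: eq_bigr => j _; rewrite inord_val; case: ltnP => // /F_supp.
Qed.

Lemma lead_sub_rank1_diag s (b d : 'I_n.+1 -> R) (A : 'M[R]_n.+1) :
  rank1_diag s b d A ->
  rank1_diag s (fun i : 'I_k => b (inord i)) (fun i => d (inord i)) (lead_sub k A).
Proof. by move=> A_r1d i j; rewrite mxE A_r1d inord_lead_eq. Qed.

Lemma lead_sub_mulmx (A : 'M[R]_n.+1) (v : 'cV[R]_n.+1) :
  (forall i : 'I_n.+1, (k <= i)%N -> v i 0 = 0) ->
  lead_sub k A *m \col_i v (inord i) 0 = \col_i (A *m v) (inord i) 0.
Proof.
move=> v_supp; apply/matrixP => i j0; rewrite mxE [RHS]mxE mxE.
rewrite -(@sum_lead (fun j => A (inord i) j * v j 0)); last first.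
  by move=> j le_kj; rewrite v_supp ?mulr0.
by apply: eq_bigr => j _; rewrite !mxE.
Qed.

End LeadingBlock.

Lemma wK_eq (R : realFieldType) (n k : nat) (A : 'M[R]_n.+1) (x : 'cV[R]_k) (lam : R) :
  lead_sub k A \in unitmx -> lead_sub k A *m x = lam *: const_mx 1 ->
  \sum_i x i 0 = 1 -> wK k A = x.
Proof.
rewrite /wK; set M := lead_sub k A; set one : 'cV[R]_k := const_mx 1.
move=> M_unit Mx sum_x.
have x_eq : x = lam *: (invmx M *m one) by rewrite scalemxAr -Mx mulKmx.
have lam_neq0 : lam != 0.
  apply/eqP => lam0; have := oner_neq0 R; rewrite -sum_x x_eq lam0 scale0r.
  by rewrite big1 ?eqxx // => i _; rewrite mxE.
have inv_one : invmx M *m one = lam^-1 *: x by rewrite x_eq scalerA mulVf ?scale1r.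
have one_x : (one^T *m x) 0 0 = 1.
  by rewrite mulmx_trmx_col -sum_x; apply: eq_bigr => i _; rewrite mxE mul1r.
by rewrite -mulmxA inv_one -scalemxAr [X in X^-1]mxE one_x mulr1 invrK scalerA mulfV ?scale1r.
Qed.

Lemma card_ord_lt (p l : nat) : (l <= p)%N -> #|[set i : 'I_p | (i < l)%N]| = l.
Proof.
move=> le_l; have -> : [set i : 'I_p | (i < l)%N] = widen_ord le_l @: setT.
  apply/setP => i; rewrite inE; apply/idP/imsetP => [lt_i|[j _ ->]]; last exact: (ltn_ord j).
  by exists (Ordinal lt_i); rewrite ?inE //; apply: val_inj.
by rewrite card_imset ?cardsT ?card_ord // => a b /(congr1 val) /= /val_inj.
Qed.

Section Unimodal.
Variables (R : realFieldType) (f : nat -> R) (P : pred nat) (N : nat).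
Hypothesis P_step : forall m, (m.+1 < N)%N -> P m -> P m.+1.
Hypothesis f_incr : forall m, (m < N)%N -> ~~ P m -> f m <= f m.+1.
Hypothesis f_decr : forall m, (m < N)%N -> P m -> f m.+1 <= f m.

Definition peak := find P (iota 0 N).

Lemma peak_le : (peak <= N)%N.
Proof. by have := find_size P (iota 0 N); rewrite size_iota. Qed.

Lemma before_peak m : (m < peak)%N -> ~~ P m.
Proof.
move=> lt_m; have lt_mN : (m < N)%N := leq_trans lt_m peak_le.
by have := before_find 0%N lt_m; rewrite nth_iota // add0n => ->.
Qed.

Lemma from_peak m : (peak <= m)%N -> (m < N)%N -> P m.
Proof.
have P_peak : (peak < N)%N -> P peak.
  move=> lt_peak; have := lt_peak.
  rewrite -[X in (_ < X)%N](size_iota 0) -has_find => /(nth_find 0%N).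
  by rewrite nth_iota.
elim: m => [|m IHm]; first by rewrite leqn0 => /eqP <-.
rewrite leq_eqVlt ltnS => /orP[/eqP <- //|le_m lt_m].
exact/P_step/IHm/ltnW.
Qed.

Lemma unimodal_incr i j : (i <= j <= peak)%N -> f i <= f j.
Proof.
move=> /andP[le_ij le_j]; have le_i := leq_trans le_ij le_j.
apply: (@Order.NatMonotonyTheory.nondecn_inP _ _ [pred k | k <= peak]%N) => //.
  by move=> a b _ /= le_b k /andP[_ lt_kb]; exact: leq_trans (ltnW lt_kb) le_b.
move=> k _ /= lt_k; apply: f_incr; last exact: before_peak.
exact: leq_trans lt_k peak_le.
Qed.

Lemma unimodal_decr i j : (peak <= i <= j)%N -> (j <= N)%N -> f j <= f i.
Proof.
move=> /andP[le_i le_ij] le_j.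
apply: (@Order.NatMonotonyTheory.nonincn_inP _ _ [pred k | peak <= k <= N]%N) => //=.
- move=> a b /andP[le_a _] /andP[_ le_b] k /andP[lt_ak lt_kb].
  by rewrite inE (leq_trans le_a (ltnW lt_ak)) (leq_trans (ltnW lt_kb) le_b).
- by move=> k /andP[le_k _] /andP[_ lt_k]; apply: f_decr => //; exact: from_peak.
- by rewrite inE (leq_trans le_i le_ij) le_j.
- by rewrite inE le_i (leq_trans le_ij le_j).
Qed.

Lemma unimodal_pos_prefix i j :
  0 < f 0 -> (i <= j <= N)%N -> 0 < f j -> 0 < f i.
Proof.
move=> f0_gt0 /andP[le_ij le_j] fj_gt0; case: (leqP i peak) => [le_i|lt_i].
  by apply: lt_le_trans f0_gt0 _; apply: unimodal_incr; rewrite le_i.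
by apply: lt_le_trans fj_gt0 _; apply: unimodal_decr; rewrite ?(ltnW lt_i).
Qed.

End Unimodal.

Section Portfolio.
Variables (R : realFieldType) (n : nat) (sigma2 : R).
Variables (beta : 'cV[R]_n.+1) (d2 : 'I_n.+1 -> R).
Hypothesis sigma2_gt0 : 0 < sigma2.
Hypothesis d2_gt0 : forall i, 0 < d2 i.
Hypothesis ratio_total_ge0 : 0 <= \sum_(i < n.+1) beta i 0 / d2 i.
Hypothesis beta_mono : forall i j : 'I_n.+1, (i <= j)%N -> beta i 0 <= beta j 0.

Local Notation p := n.+1.
Local Notation S := (Sigma sigma2 beta d2).
Local Notation l := (ell sigma2 beta d2).

(* [inord m] is junk ([ord0]) for m > n; these are only used for m <= n. *)
Definition betan m := beta (inord m) 0.
Definition d2n m := d2 (inord m).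
Definition ratio m := betan m / d2n m.
Definition ratio_sum k := \sum_(j < k) ratio j.
Definition Rfun k x := 1 / sigma2 + \sum_(j < k) ratio j * (betan j - x).
Definition Rn m := Rfun m (betan m).

Lemma betanE (i : 'I_p) : betan i = beta i 0.
Proof. by rewrite /betan inord_val. Qed.

Lemma d2nE (i : 'I_p) : d2n i = d2 i.
Proof. by rewrite /d2n inord_val. Qed.

Lemma betan_mono a b : (a <= b <= n)%N -> betan a <= betan b.
Proof.
move=> /andP[le_ab le_b]; apply: beta_mono.
by rewrite !inordK ?ltnS // (leq_trans le_ab le_b).
Qed.

Lemma d2n_gt0 m : 0 < d2n m.
Proof. exact: d2_gt0. Qed.

Lemma ratio_ge0 m : (0 <= ratio m) = (0 <= betan m).
Proof. by rewrite /ratio pmulr_lge0 // invr_gt0 d2n_gt0. Qed.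

Lemma ratio_lt0 m : (ratio m < 0) = (betan m < 0).
Proof. by rewrite !ltNge ratio_ge0. Qed.

Lemma Rfun_step k x : Rfun k.+1 x = Rfun k x + ratio k * (betan k - x).
Proof. by rewrite /Rfun big_ord_recr addrA. Qed.

Lemma Rfun_affine k x : Rfun k x = Rfun k 0 - x * ratio_sum k.
Proof.
rewrite /Rfun /ratio_sum mulr_sumr -addrA -sumrB.
by congr (_ + _); apply: eq_bigr => j _; ring.
Qed.

Lemma Rseq_Rn (i : 'I_p) : Rseq sigma2 beta d2 i = Rn i.
Proof.
rewrite /Rseq /Rn /Rfun.
rewrite (big_ord_widen _ (fun j => ratio j * (betan j - betan i)) (ltnW (ltn_ord i))).
by congr (_ + _); apply: eq_bigr => j _; rewrite /ratio !betanE d2nE.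
Qed.

Lemma Rn_step m : Rn m.+1 = Rn m - (betan m.+1 - betan m) * ratio_sum m.+1.
Proof.
rewrite /Rn; have -> : Rfun m (betan m) = Rfun m.+1 0 - betan m * ratio_sum m.+1.
  by rewrite -Rfun_affine Rfun_step subrr mulr0 addr0.
by rewrite [LHS]Rfun_affine; ring.
Qed.

Lemma ratio_sum_gt0_step m :
  (m.+1 < n)%N -> 0 < ratio_sum m.+1 -> 0 < ratio_sum m.+2.
Proof.
move=> lt_m sum_gt0; rewrite [ratio_sum m.+2]/ratio_sum big_ord_recr /= -/(ratio_sum m.+1).
have [beta_ge0|beta_lt0] := leP 0 (betan m.+1).
  by have := beta_ge0; rewrite -ratio_ge0; lra.
suff : ratio_sum m.+1 <= 0 by lra.
apply: sumr_le0 => j _; apply/ltW; rewrite ratio_lt0 (le_lt_trans _ beta_lt0) //.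
by apply: betan_mono; rewrite (ltnW (ltn_ord j)) (ltnW lt_m).
Qed.

Lemma Rn_incr m : (m < n)%N -> ~~ (0 < ratio_sum m.+1) -> Rn m <= Rn m.+1.
Proof.
move=> lt_m; rewrite -leNgt => sum_le0; rewrite Rn_step.
have step_ge0 : 0 <= betan m.+1 - betan m by rewrite subr_ge0 betan_mono ?leqnSn.
have := mulr_ge0_le0 step_ge0 sum_le0; lra.
Qed.

Lemma Rn_decr m : (m < n)%N -> 0 < ratio_sum m.+1 -> Rn m.+1 <= Rn m.
Proof.
move=> lt_m sum_gt0; rewrite Rn_step.
have step_ge0 : 0 <= betan m.+1 - betan m by rewrite subr_ge0 betan_mono ?leqnSn.
have := mulr_ge0 step_ge0 (ltW sum_gt0); lra.
Qed.

Lemma Rn0_gt0 : 0 < Rn 0.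
Proof. by rewrite /Rn /Rfun big_ord0 addr0 divr_gt0 ?ltr01. Qed.

Local Notation sum_gt0 := (fun m => 0 < ratio_sum m.+1).

Lemma Rseq_unimodal : exists s : 'I_p,
  0 < Rseq sigma2 beta d2 ord0
  /\ (forall i j : 'I_p, (i <= j)%N -> (j <= s)%N ->
        Rseq sigma2 beta d2 i <= Rseq sigma2 beta d2 j)
  /\ (forall i j : 'I_p, (s <= i)%N -> (i <= j)%N ->
        Rseq sigma2 beta d2 j <= Rseq sigma2 beta d2 i).
Proof.
exists (inord (peak sum_gt0 n)); rewrite inordK ?ltnS ?peak_le //.
split; [|split] => [|i j le_ij le_j|i j le_i le_ij]; rewrite !Rseq_Rn.
- exact: Rn0_gt0.
- by apply: (unimodal_incr Rn_incr); rewrite le_ij.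
- apply: (unimodal_decr ratio_sum_gt0_step Rn_decr).
    by rewrite le_i.
  by rewrite -ltnS.
Qed.

Lemma Rn_pos_prefix i j : (i <= j <= n)%N -> 0 < Rn j -> 0 < Rn i.
Proof. exact: (unimodal_pos_prefix ratio_sum_gt0_step Rn_incr Rn_decr Rn0_gt0). Qed.

Lemma ell_spec (i : 'I_p) : 0 < Rn i <-> (i < l)%N.
Proof.
split=> [Rn_gt0|lt_il].
  by apply: (@leq_bigmax_cond _ _ (fun i : 'I_p => i.+1) i); rewrite Rseq_Rn.
case: (ltP 0 (Rn i)) => // Rn_le0; move: lt_il; rewrite ltnNge => /negP[].
apply/bigmax_leqP => j; rewrite Rseq_Rn ltnNge => Rn_gt0; apply/negP => le_ij.
by have := Rn_pos_prefix (i := i) (j := j); rewrite le_ij -ltnS ltn_ord; lra.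
Qed.

Lemma ell_gt0 : (0 < l)%N.
Proof. exact/(ell_spec ord0)/Rn0_gt0. Qed.

Lemma ell_le : (l <= p)%N.
Proof. by apply/bigmax_leqP => i _; apply: ltn_ord. Qed.

Lemma Rn_gt0 m : (m < l)%N -> 0 < Rn m.
Proof.
move=> lt_m; have lt_mp : (m < p)%N := leq_trans lt_m ell_le.
by have := ell_spec (inord m); rewrite inordK // => -[_ ->].
Qed.

Lemma Rn_le0 m : (l <= m <= n)%N -> Rn m <= 0.
Proof.
move=> /andP[le_m le_mn]; rewrite leNgt; apply/negP.
by have := ell_spec (inord m); rewrite inordK // ltnNge le_m => -[Rn_gt0 _] /Rn_gt0.
Qed.

Lemma ratio_sum_ell_ge0 : 0 <= ratio_sum l.
Proof.
have [lt_l|ge_l] := ltnP l p; last first.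
  rewrite (_ : l = p); last by apply/eqP; rewrite eqn_leq ell_le.
  rewrite /ratio_sum (eq_bigr (fun i : 'I_p => beta i 0 / d2 i)) // => i _.
  by rewrite /ratio betanE d2nE.
have [k ell_eq] : exists k, l = k.+1 by exists l.-1; rewrite prednK ?ell_gt0.
rewrite ell_eq leNgt; apply/negP => sum_lt0.
have step_ge0 : 0 <= betan k.+1 - betan k.
  by rewrite subr_ge0 betan_mono // leqnSn -ltnS -ell_eq.
have Rk_gt0 : 0 < Rn k by apply: Rn_gt0; rewrite ell_eq.
have Rk1_le0 : Rn k.+1 <= 0 by apply: Rn_le0; rewrite -ell_eq leqnn -ltnS.
have := Rn_step k; have := mulr_ge0_le0 step_ge0 (ltW sum_lt0); lra.
Qed.

Local Notation Rl := (Rfun l).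

Lemma Rl_antitone x y : x <= y -> Rl y <= Rl x.
Proof.
move=> le_xy; rewrite (Rfun_affine l x) (Rfun_affine l y) lerD2l lerN2.
by rewrite ler_wpM2r ?ratio_sum_ell_ge0.
Qed.

Lemma Rl_gt0 m : (m < l)%N -> 0 < Rl (betan m).
Proof.
have [k ell_eq] : exists k, l = k.+1 by exists l.-1; rewrite prednK ?ell_gt0.
have Rl_last : Rl (betan k) = Rn k by rewrite ell_eq Rfun_step subrr mulr0 addr0.
have Rk_gt0 : 0 < Rn k by apply: Rn_gt0; rewrite ell_eq.
move=> lt_ml; have le_mk : (m <= k)%N by rewrite -ltnS -ell_eq.
apply: (lt_le_trans Rk_gt0); rewrite -Rl_last.
by apply: Rl_antitone; apply: betan_mono; rewrite le_mk -ltnS -ell_eq ell_le.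
Qed.

Lemma Rl_le0 m : (l <= m <= n)%N -> Rl (betan m) <= 0.
Proof.
move=> /andP[le_m le_mn]; apply: le_trans (Rn_le0 (m := l) _); last first.
  by rewrite leqnn (leq_trans le_m le_mn).
by apply/Rl_antitone/betan_mono; rewrite le_m.
Qed.

(* On the support the first-order condition sigma2 beta_i (beta . w) + d2_i w_i = lambda
   forces d2_i w_i to be affine in beta_i; Rl is the consistent choice. *)
Definition uL m := if (m < l)%N then Rl (betan m) / d2n m else 0.
Definition ZL := \sum_(i < p) uL i.
Definition wL : 'cV[R]_p := \col_i (uL i / ZL).

Lemma uL_ge0 m : 0 <= uL m.
Proof.
by rewrite /uL; case: ifP => // lt_m; rewrite divr_ge0 ?ltW ?Rl_gt0 ?d2n_gt0.
Qed.

Lemma uL_gt0 m : (m < l)%N -> 0 < uL m.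
Proof. by move=> lt_m; rewrite /uL lt_m divr_gt0 ?Rl_gt0 ?d2n_gt0. Qed.

Lemma uL_out m : (l <= m)%N -> uL m = 0.
Proof. by move=> le_m; rewrite /uL ltnNge le_m. Qed.

Lemma ZL_gt0 : 0 < ZL.
Proof.
rewrite /ZL big_ord_recl; apply: (lt_le_trans (uL_gt0 ell_gt0)).
by rewrite lerDl sumr_ge0 // => i _; apply: uL_ge0.
Qed.

Lemma wL_gt0 (i : 'I_p) : (0 < wL i 0) = (i < l)%N.
Proof.
rewrite mxE; case: ltnP => [lt_i|le_i]; first by rewrite divr_gt0 ?uL_gt0 ?ZL_gt0.
by rewrite uL_out // mul0r ltxx.
Qed.

Lemma wL_out (i : 'I_p) : (l <= i)%N -> wL i 0 = 0.
Proof. by move=> le_i; rewrite mxE uL_out ?mul0r. Qed.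

Lemma wL_feasible : feasible wL.
Proof.
split=> [|i]; last by rewrite mxE divr_ge0 ?uL_ge0 ?ltW ?ZL_gt0.
rewrite mulmx_trmx_col (eq_bigr (fun i : 'I_p => uL i / ZL)); last first.
  by move=> i _; rewrite !mxE mulr1.
by rewrite -mulr_suml divff ?gt_eqF ?ZL_gt0.
Qed.

Lemma sum_betan_uL : \sum_(j < p) betan j * uL j = ratio_sum l / sigma2.
Proof.
have -> : \sum_(j < p) betan j * uL j = \sum_(j < l) ratio j * (Rl 0 - betan j * ratio_sum l).
  rewrite (big_ord_widen p (fun j => ratio j * (Rl 0 - betan j * ratio_sum l)) ell_le).
  rewrite [RHS]big_mkcond /=; apply: eq_bigr => j _; rewrite /uL.
  by case: ifP => _; [rewrite (Rfun_affine l) /ratio; ring | rewrite mulr0].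
rewrite (eq_bigr (fun j : 'I_l => Rl 0 * ratio j - ratio_sum l * (ratio j * (betan j - 0)))).
  by rewrite sumrB -!mulr_sumr -/(ratio_sum l) {1}/Rfun; ring.
by move=> j _; ring.
Qed.

Lemma Sigma_rank1_diag : rank1_diag sigma2 (fun i => beta i 0) d2 S.
Proof. by move=> i j; rewrite !mxE big_ord1 !mxE mulr_natl mulrA. Qed.

Lemma Sigma_wL (i : 'I_p) : (S *m wL) i 0 = (Rl 0 - Rl (betan i) + d2n i * uL i) / ZL.
Proof.
have sum_beta_wL : \sum_j beta j 0 * wL j 0 = ratio_sum l / sigma2 / ZL.
  by rewrite -sum_betan_uL mulr_suml; apply: eq_bigr => j _; rewrite mxE betanE mulrA.
rewrite (rank1_diag_mulmx Sigma_rank1_diag) sum_beta_wL (Rfun_affine l (betan i)).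
rewrite betanE d2nE mxE; field.
by rewrite !gt_eqF ?ZL_gt0.
Qed.

Lemma Sigma_wL_supp (i : 'I_p) : (i < l)%N -> (S *m wL) i 0 = Rl 0 / ZL.
Proof.
by move=> lt_i; rewrite Sigma_wL /uL lt_i mulrCA mulfV ?gt_eqF ?d2n_gt0 // mulr1 subrK.
Qed.

Lemma Sigma_wL_ge (i : 'I_p) : Rl 0 / ZL <= (S *m wL) i 0.
Proof.
have [lt_i|le_i] := ltnP i l; first by rewrite Sigma_wL_supp.
rewrite Sigma_wL uL_out // mulr0 addr0 ler_pM2r ?invr_gt0 ?ZL_gt0 //.
by rewrite lerDl oppr_ge0 Rl_le0 // le_i -ltnS ltn_ord.
Qed.

Lemma wL_minimizerE v : is_minimizer S v <-> v = wL.
Proof.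
apply: (kkt_minimizerE (rank1_diag_tr Sigma_rank1_diag)
  (rank1_diag_posdef Sigma_rank1_diag sigma2_gt0 d2_gt0) wL_feasible Sigma_wL_ge).
by move=> i; rewrite wL_gt0; apply: Sigma_wL_supp.
Qed.

Lemma wL_wK (i : 'I_l) : wL (inord i) 0 = wK l S i 0.
Proof.
suff -> : wK l S = \col_i wL (inord i) 0 by rewrite mxE.
apply: (wK_eq (lam := Rl 0 / ZL)).
- exact/posdef_unitmx/(rank1_diag_posdef (lead_sub_rank1_diag ell_le Sigma_rank1_diag)).
- rewrite lead_sub_mulmx ?ell_le //; last by move=> j; apply: wL_out.
  apply/matrixP => j k; rewrite mxE Sigma_wL_supp ?mxE ?mulr1 // inordK //.
  exact: leq_trans (ltn_ord j) ell_le.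
- under eq_bigr do rewrite mxE.
  by rewrite (sum_lead ell_le (F := fun j => wL j 0)) ?(feasible_sum wL_feasible) //; apply: wL_out.
Qed.

End Portfolio.

Theorem theorem1 (R : realFieldType) (n : nat) (sigma2 : R)
  (beta : 'cV[R]_n.+1) (d2 : 'I_n.+1 -> R)
  (hsigma : 0 < sigma2)
  (hbeta : beta != 0)
  (hd2 : forall i, 0 < d2 i)
  (hsign : 0 <= \sum_(i < n.+1) beta i 0 / d2 i)
  (hord : forall i j : 'I_n.+1, (i <= j)%N -> beta i 0 <= beta j 0) :
  let Rs := Rseq sigma2 beta d2 in
  let l := ell sigma2 beta d2 in
  let S := Sigma sigma2 beta d2 in
  (* part 1 *)
  (exists s : 'I_n.+1,
      0 < Rs ord0
      /\ (forall i j : 'I_n.+1, (i <= j)%N -> (j <= s)%N -> Rs i <= Rs j)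
      /\ (forall i j : 'I_n.+1, (s <= i)%N -> (i <= j)%N -> Rs j <= Rs i))
  /\ (forall i : 'I_n.+1, 0 < Rs i <-> (i < l)%N)
  (* part 2 *)
  /\ (exists w, is_minimizer S w)
  /\ (forall w, is_minimizer S w ->
        let K := [set i : 'I_n.+1 | 0 < w i 0] in
        #|K| = l
        /\ K = [set i : 'I_n.+1 | (i < l)%N]
        /\ (forall i : 'I_l, w (inord i) 0 = wK l S i 0)
        /\ (forall i : 'I_n.+1, (l <= i)%N -> w i 0 = 0)).
Proof.
move=> Rs l S.
have minimizerE := wL_minimizerE hsigma hd2 hsign hord.
split; first exact: Rseq_unimodal.
split; first by move=> i; rewrite /Rs Rseq_Rn; apply: ell_spec.
split; first by exists (wL sigma2 beta d2); apply/minimizerE.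
move=> w /minimizerE -> K.
have supp : K = [set i : 'I_n.+1 | (i < l)%N].
  by apply/setP => i; rewrite !inE wL_gt0.
split; first by rewrite supp card_ord_lt ?ell_le.
split; first exact: supp.
split; [exact: wL_wK | exact: wL_out].
Qed.
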